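(* In the setting below with integral arrivals ($T=m$, $q_{tj}=1/m$) and running Algorithm RAND-ORDER($\alpha$) with $\alpha\ge1$, for every customer type $j$, every assortment $S\in\mathcal{S}$ and every item $i\in S$: conditional on at least one customer of type $j$ arriving, the probability that item $i$ has already been shown to customer $t_j$ (i.e., was contained in an assortment offered to her) before the algorithm reaches $S$ in the ordering $\pi$ used for customer $t_j$ is at most $\frac{1}{2\alpha}$. Here $t_j$ denotes the first customer of type $j$ to arrive.
   Context: Multi-stage multi-customer assortment problem without repeated offerings. There are $n$ items, each with one unit of inventory, $m$ customer types and $T$ time-steps; in time-step $t$, independently, a customer of type $j$ arrives with probability $q_{tj}\ge0$ ($\sum_jq_{tj}\le1$). $\mathcal{S}$ is a downward-closed family of subsets of $\{1,\dots,n\}$. For each type $j$, $S\in\mathcal{S}$, $i\in S$, $p_j(i,S)\ge0$ is the probability that a type-$j$ customer offered $S$ purchases $i$, with $\sum_{i\in S}p_j(i,S)\le1$; substitutability: $p_j(i,S)\ge p_j(i,S\cup\{i'\})$ for $i'\ne i$. Type $j$ has patience $\ell_j\in\mathbb{Z}_{>0}$: an arriving type-$j$ customer is shown a sequence of at most $\ell_j$ pairwise disjoint assortments from $\mathcal{S}$ of currently available items; at each stage her purchase decision follows the choice probabilities independently of everything else; she leaves upon a purchase or when the sequence ends. MCDLP-NR is the LP: maximize $\sum_{t=1}^T\sum_{j=1}^mq_{tj}\sum_{S\in\mathcal{S}}x_j(S)\sum_{i\in S}r_{ij}p_j(i,S)$ subject to $\sum_{t}\sum_{j}q_{tj}\sum_{S\ni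 i}x_j(S)p_j(i,S)\le1$ for all $i$; $\sum_{S}x_j(S)\sum_{i\in S}p_j(i,S)\le1$ for all $j$; $\sum_{S}x_j(S)\le\ell_j$ for all $j$; $\sum_{S\ni i}x_j(S)\le1$ for all $i,j$; $x\ge0$ (with $r_{ij}\ge 0$ revenues). Algorithm RAND-ORDER($\alpha$), for a parameter $\alpha\ge1$: solve MCDLP-NR for an optimal $x^*$. When a customer of type $j$ arrives at time $t$: if some earlier customer had type $j$, offer her nothing. Otherwise draw a uniformly random ordering $\pi$ of $\mathcal{S}$ and go through the assortments $S$ in the order $\pi$; for each $S$, independently with probability $x^*_j(S)/\alpha$, offer (as one stage) the assortment $S$ with all sold-out items and all items previously shown to this customer removed; stop as soon as the customer purchases an item or $\ell_j$ assortments have been offered. *)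

From HB Require Import structures.
From mathcomp Require Import all_boot all_order all_algebra.
Set Implicit Arguments. Unset Strict Implicit. Unset Printing Implicit Defensive.
Import Order.TTheory GRing.Theory Num.Theory.
Local Open Scope ring_scope.

Section Dist.
Variable R : realFieldType.

Definition dist (A : Type) := seq (R * A).

Definition dret (A : Type) (a : A) : dist A := [:: (1, a)].

Definition dbind (A B : Type) (d : dist A) (f : A -> dist B) : dist B :=
  flatten [seq [seq (w.1 * v.1, v.2) | v <- f w.2] | w <- d].

Definition dcoin (q : R) : dist bool := [:: (q, true); (1 - q, false)].

Definition duniform (A : Type) (l : seq A) : dist A :=
  [seq ((size l)%:R^-1, a) | a <- l].

Definition dprob (A : Type) (d : dist A) (E : A -> bool) : R :=
  \sum_(w <- d) (if E w.2 then w.1 else 0).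

Definition dcondprob (A : Type) (d : dist A) (E C : A -> bool) : R :=
  dprob d (fun a => E a && C a) / dprob d C.
End Dist.

Section Model.
Variable R : realFieldType.
Variables (n m : nat).
Variable Sfam : {set {set 'I_n}}.
(* choice probabilities: p j i S = p_j(i,S) *)
Variable p : 'I_m -> 'I_n -> {set 'I_n} -> R.

Definition downward_closed_nonempty : Prop :=
  set0 \notin Sfam /\
  forall S S' : {set 'I_n}, S \in Sfam -> S' \subset S -> S' != set0 -> S' \in Sfam.

Definition choice_model : Prop :=
  (forall j S i, S \in Sfam -> i \in S -> 0 <= p j i S) /\
  (forall j S, S \in Sfam -> \sum_(i in S) p j i S <= 1) /\
  (forall j S i i', S \in Sfam -> S :|: [set i'] \in Sfam -> i \in S -> i' != i ->
      p j i (S :|: [set i']) <= p j i S).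

Variables (T : nat) (q : 'I_T -> 'I_m -> R) (r : 'I_n -> 'I_m -> R) (ell : 'I_m -> nat).

Definition lp_objective (x : 'I_m -> {set 'I_n} -> R) : R :=
  \sum_(t < T) \sum_(j < m) q t j *
     \sum_(S in Sfam) x j S * \sum_(i in S) r i j * p j i S.

Definition lp_feasible (x : 'I_m -> {set 'I_n} -> R) : Prop :=
  (forall j S, S \in Sfam -> 0 <= x j S) /\
  (forall i, \sum_(t < T) \sum_(j < m) q t j *
       \sum_(S in Sfam | i \in S) x j S * p j i S <= 1) /\
  (forall j, \sum_(S in Sfam) x j S * \sum_(i in S) p j i S <= 1) /\
  (forall j, \sum_(S in Sfam) x j S <= (ell j)%:R) /\
  (forall i j, \sum_(S in Sfam | i \in S) x j S <= 1).

Definition lp_optimal (x : 'I_m -> {set 'I_n} -> R) : Prop :=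
  lp_feasible x /\ forall y, lp_feasible y -> lp_objective y <= lp_objective x.
End Model.

Section Algorithm.
Variable R : realFieldType.
Variables (n m : nat).
Variable Sfam : {set {set 'I_n}}.
Variable p : 'I_m -> 'I_n -> {set 'I_n} -> R.
Variable x : 'I_m -> {set 'I_n} -> R.
Variable alpha : R.
Variable ell : 'I_m -> nat.
(* the tracked assortment S0 (we record the set of items shown before reaching it) *)
Variable S0 : {set 'I_n}.

Definition purchase (j : 'I_m) (A : {set 'I_n}) : dist R (option 'I_n) :=
  [seq (p j i A, Some i) | i <- enum A] ++
  [:: (1 - \sum_(i in A) p j i A, None)].

(* State: items shown so far, number of stages offered so far,
   and the snapshot of the shown set at the moment S0 is reached in pi.
   Output: (purchased item, final shown set, snapshot). *)
Fixpoint session (j : 'I_m) (avail : {set 'I_n}) (pi : seq {set 'I_n})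
    (shown : {set 'I_n}) (k : nat) (snap : option {set 'I_n})
    : dist R (option 'I_n * {set 'I_n} * option {set 'I_n}) :=
  match pi with
  | [::] => dret R (None, shown, snap)
  | Sa :: pi' =>
    if (ell j <= k)%N then dret R (None, shown, snap) else
    let snap' := if Sa == S0 then Some shown else snap in
    dbind (dcoin (x j Sa / alpha)) (fun b =>
      if b then
        let A := (Sa :&: avail) :\: shown in
        dbind (purchase j A) (fun o =>
          match o with
          | Some it => dret R (Some it, shown :|: A, snap')
          | None => session j avail pi' (shown :|: A) k.+1 snap'
          end)
      else session j avail pi' shown k snap')
  end.

(* the item i0 has been shown before S0 is reached (if the session stopped
   before reaching S0, the whole set of shown items counts) *)
Definition shown_before (i0 : 'I_n)
    (res : option 'I_n * {set 'I_n} * option {set 'I_n}) : bool :=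
  i0 \in odflt res.1.2 res.2.

(* Global state: available items, types already arrived, and the observation
   for the first type-j0 customer (None while no type-j0 customer arrived). *)
Definition gstate := ({set 'I_n} * {set 'I_m} * option bool)%type.

Definition step (j0 : 'I_m) (i0 : 'I_n) (st : gstate) : dist R gstate :=
  let: (avail, seen, obs) := st in
  dbind (duniform R (enum 'I_m)) (fun j =>
    if j \in seen then dret R st else
    dbind (duniform R (permutations (enum Sfam))) (fun pi =>
      dbind (session j avail pi set0 0 None) (fun res =>
        let avail' := if res.1.1 is Some it then avail :\ it else avail in
        let obs' := if j == j0 then Some (shown_before i0 res) else obs in
        dret R (avail', j |: seen, obs')))).

Fixpoint run (j0 : 'I_m) (i0 : 'I_n) (k : nat) (st : gstate) : dist R gstate :=
  match k with
  | 0 => dret R st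
  | k'.+1 => dbind (step j0 i0 st) (run j0 i0 k')
  end.

Definition rand_order_process (j0 : 'I_m) (i0 : 'I_n) : dist R gstate :=
  run j0 i0 m (setT, set0, None).
End Algorithm.

Definition integral_q (R : realFieldType) (m : nat) : 'I_m -> 'I_m -> R :=
  fun _ _ => (m%:R)^-1.

From HB Require Import structures.
From mathcomp Require Import all_boot all_order all_algebra.
From mathcomp Require Import lra.
Import Order.TTheory GRing.Theory Num.Theory.
Set Implicit Arguments. Unset Strict Implicit. Unset Printing Implicit Defensive.
Local Open Scope ring_scope.

(* The proof has three
   steps.
   1. (Union bound along the ordering.)  In one session with ordering pi, the
      expected indicator that i was shown before S is reached is at most
      [prefix_mass pi], the sum of the offer probabilities x_j(S')/alpha over the
      assortments S' containing i that precede S in pi ([session_shown_bound]).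
   2. (Reversal.)  The prefixes of S in pi and in rev pi are disjoint, so by the
      LP constraint sum_{S' ∋ i} x_j(S') <= 1 the two prefix masses add up to at
      most 1/alpha; since reversal permutes the orderings, the average prefix mass
      under a uniform ordering is at most 1/(2 alpha) ([sum_prefix_mass]).
   3. (Potential.)  With c = 1/(2 alpha), the potential
      [obs = Some true] - c [obs <> None] is frozen once t_j has been served and
      has nonpositive expected increment when she is, so its final expectation is
      <= 0 ([potential_nonpos]); rearranging gives the conditional bound. *)

Section Expectation.
Variable R : realFieldType.

Definition expect (A : Type) (d : dist R A) (h : A -> R) : R :=
  \sum_(w <- d) w.1 * h w.2.
Lemma sumr_const_seq (T : Type) (s : seq T) (b : R) :
  \sum_(a <- s) b = (size s)%:R * b.
Proof. by rewrite big_const_seq count_predT -Monoid.iteropE mulr_natl. Qed.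

Definition weight (A : Type) (d : dist R A) : R := \sum_(w <- d) w.1.
Definition nonneg (A : Type) (d : dist R A) : bool := all (fun w => 0 <= w.1) d.

Lemma expect_ret (A : Type) (a : A) h : expect (dret R a) h = h a.
Proof. by rewrite /expect big_cons big_nil mul1r addr0. Qed.

Lemma expect_bind (A B : Type) (d : dist R A) (f : A -> dist R B) h :
  expect (dbind d f) h = expect d (fun a => expect (f a) h).
Proof.
rewrite /expect; elim: d => [|w d IH]; first by rewrite /dbind !big_nil.
rewrite /dbind /= big_cat /= -/(dbind d f) IH big_cons big_map big_distrr /=.
by congr (_ + _); apply: eq_bigr => v _; rewrite mulrA.
Qed.

Lemma eq_expect (A : Type) (d : dist R A) h h' :
  (forall a, h a = h' a) -> expect d h = expect d h'.
Proof. by move=> eqh; apply: eq_bigr => w _; rewrite eqh. Qed.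

Lemma weight_expect (A : Type) (d : dist R A) : weight d = expect d (fun _ => 1).
Proof. by apply: eq_bigr => w _; rewrite mulr1. Qed.

Lemma expect_cst (A : Type) (d : dist R A) h c :
  weight d = 1 -> (forall a, h a = c) -> expect d h = c.
Proof.
move=> d1 hc; rewrite /expect (eq_bigr (fun w => w.1 * c)); last by move=> w _; rewrite hc.
by rewrite -mulr_suml -/(weight d) d1 mul1r.
Qed.

Lemma expect_subr_cst (A : Type) (d : dist R A) h c :
  weight d = 1 -> expect d (fun a => h a - c) = expect d h - c.
Proof.
move=> d1; rewrite /expect (eq_bigr (fun w => w.1 * h w.2 - w.1 * c)); last first.
  by move=> w _; rewrite mulrBr.
by rewrite sumrB -mulr_suml -/(weight d) d1 mul1r.
Qed.

Lemma ler_expect (A : Type) (d : dist R A) h h' :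
  nonneg d -> (forall a, h a <= h' a) -> expect d h <= expect d h'.
Proof.
rewrite /expect /nonneg => + hh'; elim: d => [|w d IH] /=; first by rewrite !big_nil.
by move=> /andP[w0 d0]; rewrite !big_cons lerD ?IH ?ler_wpM2l.
Qed.

Lemma expect_le_cst (A : Type) (d : dist R A) h c :
  nonneg d -> weight d = 1 -> (forall a, h a <= c) -> expect d h <= c.
Proof.
move=> d0 d1 hc; rewrite -(@expect_cst _ d (fun _ => c) c d1 (fun _ => erefl)).
exact: ler_expect.
Qed.

Lemma weight_ret (A : Type) (a : A) : weight (dret R a) = 1.
Proof. by rewrite weight_expect expect_ret. Qed.

Lemma weight_bind (A B : Type) (d : dist R A) (f : A -> dist R B) :
  weight d = 1 -> (forall a, weight (f a) = 1) -> weight (dbind d f) = 1.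
Proof.
by move=> d1 f1; rewrite weight_expect expect_bind; apply: expect_cst => // a; rewrite -weight_expect.
Qed.

Lemma nonneg_ret (A : Type) (a : A) : nonneg (dret R a).
Proof. by rewrite /nonneg /= ler01. Qed.

Lemma nonneg_bind (A B : Type) (d : dist R A) (f : A -> dist R B) :
  nonneg d -> (forall a, nonneg (f a)) -> nonneg (dbind d f).
Proof.
rewrite /nonneg; elim: d => [|w d IH] //= /andP[w0 d0] f0.
rewrite /dbind /= all_cat -/(dbind d f) IH // andbT all_map.
by apply: sub_all (f0 w.2) => v /= v0; apply: mulr_ge0.
Qed.

Lemma expect_coin q h : expect (dcoin q) h = q * h true + (1 - q) * h false.
Proof. by rewrite /expect /dcoin !big_cons big_nil addr0. Qed.

Lemma weight_coin q : weight (dcoin q) = 1.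
Proof. by rewrite weight_expect expect_coin !mulr1 addrC subrK. Qed.

Lemma nonneg_coin q : 0 <= q <= 1 -> nonneg (dcoin q).
Proof. by move=> /andP[q0 q1]; rewrite /nonneg /= q0 subr_ge0 q1. Qed.

Lemma expect_uniform (A : Type) (l : seq A) h :
  expect (duniform R l) h = (size l)%:R^-1 * \sum_(a <- l) h a.
Proof. by rewrite /expect /duniform big_map big_distrr. Qed.

Lemma weight_uniform (A : Type) (l : seq A) : (0 < size l)%N -> weight (duniform R l) = 1.
Proof.
move=> l0; rewrite weight_expect expect_uniform sumr_const_seq mulr1.
by rewrite mulVf // pnatr_eq0 -lt0n.
Qed.

Lemma nonneg_uniform (A : Type) (l : seq A) : nonneg (duniform R l).
Proof.
rewrite /nonneg /duniform all_map; have : 0 <= (size l)%:R^-1 :> R by rewrite invr_ge0 ler0n.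
by move: (size l)%:R^-1 => q q0; elim: l => //= a l ->; rewrite q0.
Qed.

Lemma nonneg_bind_uniform (A : eqType) (B : Type) (l : seq A) (f : A -> dist R B) :
  {in l, forall a, nonneg (f a)} -> nonneg (dbind (duniform R l) f).
Proof.
move=> f0; have : all (fun w => nonneg (f w.2)) (duniform R l).
  by rewrite /duniform all_map; apply/allP => a al; exact: f0.
move: (nonneg_uniform l); elim: (duniform R l) => [|w d IH] //= /andP[w0 d0] /andP[fw fd].
move: (IH d0 fd); rewrite /nonneg /dbind /= all_cat -/(dbind d f) => ->; rewrite andbT all_map.
by apply: sub_all fw => v /= v0; apply: mulr_ge0.
Qed.

Lemma expect_indicator (A : Type) (d : dist R A) (E : A -> bool) :
  expect d (fun a => (E a)%:R) = dprob d E.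
Proof. by apply: eq_bigr => w _; case: (E w.2); rewrite ?mulr1 ?mulr0. Qed.

Lemma expect_indicatorB (A : Type) (d : dist R A) (E C : A -> bool) c :
  expect d (fun a => (E a)%:R - c * (C a)%:R) = dprob d E - c * dprob d C.
Proof.
rewrite -!expect_indicator /expect mulr_sumr -sumrB.
by apply: eq_bigr => w _; rewrite mulrBr mulrCA.
Qed.

Lemma expect_ge0 (A : Type) (d : dist R A) h :
  nonneg d -> (forall a, 0 <= h a) -> 0 <= expect d h.
Proof.
rewrite /expect /nonneg => + h0; elim: d => [|w d IH] /=; first by rewrite big_nil.
by move=> /andP[w0 d0]; rewrite big_cons addr_ge0 ?IH ?mulr_ge0.
Qed.

Lemma dprob_ge0 (A : Type) (d : dist R A) E : nonneg d -> 0 <= dprob d E.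
Proof. by move=> d0; rewrite -expect_indicator expect_ge0. Qed.

Lemma indicator_le_add (a b c : bool) : a ==> b || c -> (a%:R : R) <= b%:R + c%:R.
Proof. by case: a; case: b; case: c => //= _; rewrite ?mulr1n ?mulr0n; lra. Qed.

(* A conditional probability is at most c as soon as E implies C and
   P(E) <= c P(C); this also covers the degenerate case P(C) = 0. *)
Lemma dcondprob_le (A : Type) (d : dist R A) (E C : A -> bool) c :
  nonneg d -> 0 <= c -> (forall a, E a -> C a) ->
  dprob d E <= c * dprob d C -> dcondprob d E C <= c.
Proof.
move=> d0 c0 EC Ele; rewrite /dcondprob.
have -> : dprob d (fun a => E a && C a) = dprob d E.
  by apply: eq_bigr => w _; case: (boolP (E w.2)) => [/EC ->|].
have [C0|CN0] := eqVneq (dprob d C) 0; first by rewrite C0 invr0 mulr0.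
have Cpos : 0 < dprob d C by rewrite lt_def CN0 dprob_ge0.
by rewrite ler_pdivrMr // mulrC.
Qed.
End Expectation.

Section Reversal.
Variable R : realFieldType.

Lemma sum_permutations_rev (T : eqType) (s : seq T) (g : seq T -> R) :
  \sum_(pi <- permutations s) g (rev pi) = \sum_(pi <- permutations s) g pi.
Proof.
rewrite -(big_map rev predT g); apply: perm_big; apply: uniq_perm.
- by rewrite map_inj_uniq ?permutations_uniq //; exact: (can_inj revK).
- exact: permutations_uniq.
move=> pi; apply/mapP/idP => [[pi' + ->]|pi_s]; first by rewrite !mem_permutations perm_rev.
by exists (rev pi); rewrite ?revK // mem_permutations perm_rev -mem_permutations.
Qed.

Lemma sum_permutations_le_half (T : eqType) (s : seq T) (g : seq T -> R) b :
  {in permutations s, forall pi, g pi + g (rev pi) <= b} ->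
  \sum_(pi <- permutations s) g pi <= (size (permutations s))%:R * (b / 2).
Proof.
move=> gb; set P := permutations s.
have sum2 : \sum_(pi <- P) (g pi + g (rev pi)) <= (size P)%:R * b.
  rewrite -sumr_const_seq big_seq [X in _ <= X]big_seq.
  by apply: ler_sum => pi /gb.
rewrite big_split /= sum_permutations_rev in sum2; lra.
Qed.
End Reversal.

Section Session.
Variable R : realFieldType.
Variables (n m : nat) (Sfam : {set {set 'I_n}}) (p : 'I_m -> 'I_n -> {set 'I_n} -> R).
Variables (x : 'I_m -> {set 'I_n} -> R) (alpha : R) (ell : 'I_m -> nat).
Variables (S0 : {set 'I_n}) (i0 : 'I_n).
Hypothesis Sfam_dc : downward_closed_nonempty Sfam.
Hypothesis p_choice : choice_model Sfam p.
Hypothesis x_ge0 : forall j S, S \in Sfam -> 0 <= x j S.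
Hypothesis x_le1 : forall j S, S \in Sfam -> x j S <= 1.
Hypothesis alpha_ge1 : 1 <= alpha.

Local Notation session := (session p x alpha ell S0).

Lemma alpha_gt0 : 0 < alpha.
Proof. exact: lt_le_trans ltr01 alpha_ge1. Qed.

Lemma offer_prob01 j S : S \in Sfam -> 0 <= x j S / alpha <= 1.
Proof.
move=> SF; rewrite divr_ge0 ?x_ge0 ?(ltW alpha_gt0) //=.
by rewrite ler_pdivrMr ?alpha_gt0 // mul1r (le_trans (x_le1 j SF)).
Qed.

Lemma weight_purchase j A : weight (purchase p j A) = 1.
Proof.
rewrite /weight /purchase big_cat big_map big_cons big_nil /=.
by rewrite big_enum addr0 addrC subrK.
Qed.

(* What is actually offered when the ordering reaches S is a (possibly empty)
   subset of S, hence an assortment of the family by downward closure. *)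
Lemma nonneg_purchase_offer j S avail shown : S \in Sfam ->
  nonneg (purchase p j ((S :&: avail) :\: shown)).
Proof.
move=> SF; set A := (S :&: avail) :\: shown.
case: p_choice => [p_ge0 [p_sum _]].
have [-> | A_nz] := eqVneq A set0.
  by rewrite /nonneg /purchase /= enum_set0 /= big_set0 subr0 ler01.
have AF : A \in Sfam.
  by case: Sfam_dc => _ dc; apply: dc SF _ A_nz; rewrite /A subDset subsetU // subsetIl orbT.
rewrite /nonneg /purchase all_cat all_map /= subr_ge0 (p_sum j A AF) !andbT.
by apply/allP => i; rewrite mem_enum => iA /=; apply: p_ge0.
Qed.

Lemma weight_session j avail pi shown k snap :
  weight (session j avail pi shown k snap) = 1.
Proof.
elim: pi shown k snap => [|S pi IH] shown k snap /=; first exact: weight_ret.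
case: ifP => _; first exact: weight_ret.
apply: weight_bind => [|[]]; [exact: weight_coin | | exact: IH].
by apply: weight_bind => [|[it|]]; [exact: weight_purchase | exact: weight_ret | exact: IH].
Qed.

Lemma nonneg_session j avail pi shown k snap : all (mem Sfam) pi ->
  nonneg (session j avail pi shown k snap).
Proof.
elim: pi shown k snap => [|S pi IH] shown k snap; first by move=> _; exact: nonneg_ret.
move=> /andP[SF piF] /=; case: ifP => _; first exact: nonneg_ret.
apply: nonneg_bind => [|[]]; [exact: nonneg_coin (offer_prob01 j SF) | | exact: IH].
by apply: nonneg_bind => [|[it|]]; [exact: nonneg_purchase_offer | exact: nonneg_ret | exact: IH].
Qed.

Definition shown_ind (res : option 'I_n * {set 'I_n} * option {set 'I_n}) : R :=
  (shown_before i0 res)%:R.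

Lemma session_snapshot_fixed j avail pi shown k snap : S0 \notin pi ->
  expect (session j avail pi shown k (Some snap)) shown_ind = (i0 \in snap)%:R.
Proof.
elim: pi shown k => [|S pi IH] shown k /=; first by rewrite expect_ret.
rewrite in_cons negb_or eq_sym => /andP[/negbTE -> S0pi].
case: ifP => _; first by rewrite expect_ret.
rewrite expect_bind; apply: expect_cst => [|[]]; [exact: weight_coin | | exact: IH].
rewrite expect_bind; apply: expect_cst => [|[it|]]; [exact: weight_purchase | | exact: IH].
by rewrite expect_ret.
Qed.

Definition prefix_mass j (pi : seq {set 'I_n}) : R :=
  \sum_(S <- take (index S0 pi) pi | i0 \in S) x j S / alpha.

Lemma prefix_mass_ge0 j pi : all (mem Sfam) pi -> 0 <= prefix_mass j pi.
Proof.
move=> piF; rewrite /prefix_mass big_seq_cond; apply: sumr_ge0 => S /andP[/mem_take Spi _].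
by case/andP: (offer_prob01 j (allP piF S Spi)).
Qed.

Lemma prefix_mass_cons j S pi : S != S0 ->
  prefix_mass j (S :: pi) = (i0 \in S)%:R * (x j S / alpha) + prefix_mass j pi.
Proof.
move=> SS0; rewrite /prefix_mass /= (negbTE SS0) /= big_cons.
by case: (i0 \in S); rewrite ?mul1r ?mul0r ?add0r.
Qed.

(* Step 1: union bound along the ordering, starting from the items [shown]. *)
Lemma session_shown_bound j avail pi shown k : uniq pi -> all (mem Sfam) pi ->
  expect (session j avail pi shown k None) shown_ind
    <= (i0 \in shown)%:R + prefix_mass j pi.
Proof.
elim: pi shown k => [|S pi IH] shown k.
  by move=> _ _; rewrite expect_ret /prefix_mass /= big_nil addr0.
move=> /= /andP[Spi piU] /andP[SF piF].
case: ifP => _; first by rewrite expect_ret lerDl prefix_mass_ge0 //= SF.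
case: (eqVneq S S0) Spi => [-> S0pi | SS0 _].
  rewrite /prefix_mass /= eqxx big_nil addr0 expect_bind.
  rewrite le_eqVlt; apply/orP; left; apply/eqP.
  apply: expect_cst => [|[]]; [exact: weight_coin | | exact: session_snapshot_fixed].
  rewrite expect_bind; apply: expect_cst => [|[it|]]; first exact: weight_purchase.
    by rewrite expect_ret.
  exact: session_snapshot_fixed.
rewrite prefix_mass_cons // expect_bind expect_coin.
set A := (S :&: avail) :\: shown; case/andP: (offer_prob01 j SF) => q0 q1.
have shownA : (i0 \in shown :|: A) ==> (i0 \in shown) || (i0 \in S).
  by apply/implyP; rewrite /A !inE => /orP[->|/and3P[_ -> _]]; rewrite ?orbT.
have offered : expect (dbind (purchase p j A) (fun o => match o with
          | Some it => dret R (Some it, shown :|: A, None)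
          | None => session j avail pi (shown :|: A) k.+1 None
          end)) shown_ind <= (i0 \in shown)%:R + (i0 \in S)%:R + prefix_mass j pi.
  rewrite expect_bind; apply: expect_le_cst => [||[it|]].
  - exact: nonneg_purchase_offer.
  - exact: weight_purchase.
  - rewrite expect_ret /shown_ind /shown_before /= (le_trans (indicator_le_add _ shownA)) //.
    by rewrite lerDl prefix_mass_ge0.
  - by rewrite (le_trans (IH _ _ piU piF)) // lerD2r indicator_le_add.
have skipped := IH shown k piU piF.
have q1' : 0 <= 1 - x j S / alpha by rewrite subr_ge0.
apply: le_trans (lerD (ler_wpM2l q0 offered) (ler_wpM2l q1' skipped)) _.
case: (i0 \in S) => /=; rewrite ?mulr1n ?mulr0n; lra.
Qed.
End Session.

Section Process.
Variable R : realFieldType.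
Variables (n m : nat) (Sfam : {set {set 'I_n}}) (p : 'I_m -> 'I_n -> {set 'I_n} -> R).
Variables (x : 'I_m -> {set 'I_n} -> R) (alpha : R) (ell : 'I_m -> nat).
Variables (S0 : {set 'I_n}) (i0 : 'I_n) (j0 : 'I_m).
Hypothesis Sfam_dc : downward_closed_nonempty Sfam.
Hypothesis p_choice : choice_model Sfam p.
Hypothesis x_ge0 : forall j S, S \in Sfam -> 0 <= x j S.
Hypothesis x_le1 : forall j S, S \in Sfam -> x j S <= 1.
Hypothesis alpha_ge1 : 1 <= alpha.
Hypothesis x_item_le1 : \sum_(S in Sfam | i0 \in S) x j0 S <= 1.
Hypothesis S0F : S0 \in Sfam.
Hypothesis i0S0 : i0 \in S0.

Local Notation session := (session p x alpha ell S0).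
Local Notation prefix_mass := (prefix_mass x alpha S0 i0 j0).
Local Notation shown_ind := (shown_ind R i0).
Local Notation step := (step Sfam p x alpha ell S0 j0 i0).
Local Notation run := (run Sfam p x alpha ell S0 j0 i0).
Local Notation c := ((2 * alpha)^-1).

Definition orderings : seq (seq {set 'I_n}) := permutations (enum Sfam).

Lemma orderings_family pi : pi \in orderings -> all (mem Sfam) pi.
Proof. by rewrite mem_permutations => piE; apply/allP => S; rewrite (perm_mem piE) mem_enum. Qed.

Lemma orderings_uniq pi : pi \in orderings -> uniq pi.
Proof. by rewrite mem_permutations => piE; rewrite (perm_uniq piE) enum_uniq. Qed.

Lemma orderings_nonempty : (0 < size orderings)%N.
Proof.
have : enum Sfam \in orderings by rewrite mem_permutations perm_refl.
by rewrite lt0n size_eq0; apply: contraTneq => ->.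
Qed.

(* Step 2a: the prefixes of S0 in pi and in rev pi are disjoint parts of pi. *)
Lemma prefix_mass_rev pi : pi \in orderings ->
  prefix_mass pi + prefix_mass (rev pi) <= alpha^-1.
Proof.
move=> piO; have piU := orderings_uniq piO; move: piO; rewrite mem_permutations => piE.
have total : \sum_(S <- pi | i0 \in S) x j0 S / alpha <= alpha^-1.
  rewrite (perm_big _ piE) big_enum_cond -mulr_suml -[X in _ <= X]mul1r.
  by rewrite ler_wpM2r // invr_ge0 ltW // alpha_gt0.
have S0pi : S0 \in pi by rewrite (perm_mem piE) mem_enum.
move: piU total; case/splitPr: S0pi => pi1 pi2.
rewrite cat_uniq /= => /and3P[_ /norP[S0pi1 _] /andP[S0pi2 _]].
rewrite /prefix_mass rev_cat rev_cons cat_rcons !index_cat mem_rev (negbTE S0pi1) (negbTE S0pi2).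
rewrite /= !eqxx !addn0 take_size_cat // take_size_cat ?size_rev // big_rev.
rewrite big_cat big_cons /= i0S0; have := offer_prob01 x_ge0 x_le1 alpha_ge1 j0 S0F.
by case/andP=> q0 _; lra.
Qed.

Lemma sum_prefix_mass : \sum_(pi <- orderings) prefix_mass pi <= (size orderings)%:R * c.
Proof.
have -> : c = alpha^-1 / 2 by rewrite invfM mulrC.
by apply: sum_permutations_le_half => pi; exact: prefix_mass_rev.
Qed.

Definition potential (st : gstate n m) : R :=
  (st.2 == Some true)%:R - c * (st.2 != None)%:R.

Lemma step_unfold avail (seen : {set 'I_m}) (obs : option bool) : step (avail, seen, obs) =
  dbind (duniform R (enum 'I_m)) (fun j =>
    if j \in seen then dret R (avail, seen, obs) else
    dbind (duniform R orderings) (fun pi =>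
      dbind (session j avail pi set0 0 None) (fun res =>
        dret R ((if res.1.1 is Some it then avail :\ it else avail), j |: seen,
                if j == j0 then Some (shown_before i0 res) else obs)))).
Proof. by []. Qed.

Lemma run_succ k st : run k.+1 st = dbind (step st) (run k).
Proof. by []. Qed.

Lemma types_nonempty : (0 < size (enum 'I_m))%N.
Proof. by rewrite size_enum_ord (leq_ltn_trans (leq0n j0) (ltn_ord j0)). Qed.

Lemma nonneg_run k st : nonneg (run k st).
Proof.
elim: k st => [|k IH] [[avail seen] obs]; first exact: nonneg_ret.
rewrite run_succ; apply: nonneg_bind IH; rewrite step_unfold.
apply: nonneg_bind => [|j]; first exact: nonneg_uniform.
case: ifP => _; first exact: nonneg_ret.
apply: nonneg_bind_uniform => pi piO; apply: nonneg_bind => [|res]; last exact: nonneg_ret.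
exact (nonneg_session ell S0 Sfam_dc p_choice x_ge0 x_le1 alpha_ge1 _ _ _ _ _ (orderings_family piO)).
Qed.

Lemma potential_after_observation k avail (seen : {set 'I_m}) (b : bool) : j0 \in seen ->
  expect (run k (avail, seen, Some b)) potential = b%:R - c.
Proof.
elim: k avail seen => [|k IH] avail seen j0seen.
  by rewrite expect_ret /potential /=; case: b; rewrite ?mulr1.
rewrite run_succ expect_bind step_unfold expect_bind.
apply: expect_cst => [|j]; first exact: weight_uniform types_nonempty.
case: ifP => jseen; first by rewrite expect_ret IH.
have /negbTE -> : j != j0 by apply: contraFneq jseen => ->.
rewrite expect_bind; apply: expect_cst => [|pi]; first exact: weight_uniform orderings_nonempty.
rewrite expect_bind; apply: expect_cst => [|res]; first exact: weight_session.
by rewrite expect_ret IH // in_setU1 j0seen orbT.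
Qed.

(* Step 3b: serving t_{j0} has nonpositive expected potential, by Steps 1-2. *)
Lemma first_session_drift avail :
  \sum_(pi <- orderings) expect (session j0 avail pi set0 0 None) (fun res => shown_ind res - c)
    <= 0.
Proof.
apply: (le_trans (y := \sum_(pi <- orderings) (prefix_mass pi - c))).
  rewrite big_seq [X in _ <= X]big_seq; apply: ler_sum => pi piO.
  rewrite expect_subr_cst ?weight_session // lerD2r.
  have := session_shown_bound ell S0 i0 Sfam_dc p_choice x_ge0 x_le1 alpha_ge1 j0 avail set0 0
    (orderings_uniq piO) (orderings_family piO).
  by rewrite in_set0 add0r.
by rewrite sumrB sumr_const_seq subr_le0 sum_prefix_mass.
Qed.

Lemma potential_nonpos k avail (seen : {set 'I_m}) : j0 \notin seen ->
  expect (run k (avail, seen, None)) potential <= 0.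
Proof.
elim: k avail seen => [|k IH] avail seen j0seen.
  by rewrite expect_ret /potential /= mulr0 subr0.
rewrite run_succ expect_bind step_unfold expect_bind expect_uniform.
rewrite pmulr_rle0 ?invr_gt0 ?ltr0n ?types_nonempty //; apply: sumr_le0 => j _.
case: ifP => jseen; first by rewrite expect_ret IH.
rewrite expect_bind expect_uniform pmulr_rle0 ?invr_gt0 ?ltr0n ?orderings_nonempty //.
have [-> | jj0] := eqVneq j j0.
  rewrite (eq_bigr (fun pi => expect (session j0 avail pi set0 0 None)
                              (fun res => shown_ind res - c))) ?first_session_drift //.
  move=> pi _; rewrite expect_bind; apply: eq_expect => res.
  by rewrite expect_ret potential_after_observation // in_setU1 eqxx.
rewrite big_seq; apply: sumr_le0 => pi piO; rewrite expect_bind.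
apply: expect_le_cst => [||res]; first exact (nonneg_session ell S0 Sfam_dc p_choice x_ge0 x_le1 alpha_ge1 _ _ _ _ _ (orderings_family piO)).
  exact: weight_session.
by rewrite expect_ret IH // in_setU1 negb_or eq_sym jj0.
Qed.

Lemma process_bound : dcondprob (run m (setT, set0, None))
  (fun st => st.2 == Some true) (fun st => st.2 != None) <= c.
Proof.
apply: dcondprob_le => [||st /eqP -> //|]; first exact: nonneg_run.
  by rewrite invr_ge0 mulr_ge0 // ltW // alpha_gt0.
rewrite -subr_le0 -expect_indicatorB.
by apply: potential_nonpos; rewrite in_set0.
Qed.
End Process.

(* In a feasible LP solution every assortment of the family has x_j(S) <= 1:
   pick an item of the nonempty S and use the constraint sum_{S' ∋ i} x_j(S') <= 1. *)
Lemma lp_feasible_le1 (R : realFieldType) (n m T : nat) (Sfam : {set {set 'I_n}})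
    (p : 'I_m -> 'I_n -> {set 'I_n} -> R) (q : 'I_T -> 'I_m -> R) (ell : 'I_m -> nat)
    (x : 'I_m -> {set 'I_n} -> R) :
  downward_closed_nonempty Sfam -> lp_feasible Sfam p q ell x ->
  forall j S, S \in Sfam -> x j S <= 1.
Proof.
move=> [S0F _] [x_ge0 [_ [_ [_ x_item_le1]]]] j S SF.
have /set0Pn [i iS] : S != set0 by apply: contraTneq SF => ->.
apply: le_trans (x_item_le1 i j); rewrite (bigD1 S) ?SF ?iS //= lerDl.
by apply: sumr_ge0 => S' /andP[/andP[S'F _] _]; exact: x_ge0.
Qed.

Theorem lemma4p5 (R : realFieldType) (n m : nat)
  (Sfam : {set {set 'I_n}})
  (p : 'I_m -> 'I_n -> {set 'I_n} -> R)
  (r : 'I_n -> 'I_m -> R) (ell : 'I_m -> nat)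
  (x : 'I_m -> {set 'I_n} -> R) (alpha : R)
  (hS : downward_closed_nonempty Sfam)
  (hp : choice_model Sfam p)
  (hr : forall i j, 0 <= r i j)
  (hell : forall j, (0 < ell j)%N)
  (hx : lp_optimal Sfam p (@integral_q R m) r ell x)
  (halpha : 1 <= alpha)
  (j : 'I_m) (S : {set 'I_n}) (i : 'I_n)
  (hSin : S \in Sfam) (hi : i \in S) :
  dcondprob (rand_order_process Sfam p x alpha ell S j i)
    (fun st => st.2 == Some true)
    (fun st => st.2 != None)
  <= (2 * alpha)^-1.
Proof.
case: hx => [xF _]; have x_le1 := lp_feasible_le1 hS xF.
case: (xF) => [x_ge0 [_ [_ [_ x_item_le1]]]].
exact: process_bound hS hp x_ge0 x_le1 halpha (x_item_le1 i j) hSin hi.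
Qed.
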